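(* Let $S$ be a group, $A$ a left $S$-act without zero subacts, $B$ any left $S$-act, and $I$ a set with $|I|\ge 1$. Then: (i) $B\amalg A^{(\ast)I}\amalg z_1$ and $B\amalg A\amalg z_1$ are geometrically equivalent; (ii) $B\amalg A^{(\ast)I}\amalg(z_1\amalg z_2)$ and $B\amalg A\amalg(z_1\amalg z_2)$ are geometrically equivalent.
   Context: A left $S$-act is a nonempty set with an action $S\times A\to A$ satisfying $1a=a$, $(st)a=s(ta)$; homomorphisms preserve the action; $\amalg$ denotes coproduct (disjoint union), and $A^{(\ast)I}=\coprod_{i\in I}A_i$ with each $A_i=A$. A zero $S$-act is a one-element $S$-act; $z_1,z_2$ denote zero $S$-acts. A zero subact of $A$ is a one-element subact. For a nonempty finite set $X$, $F_X=\coprod_{x\in X}S_x$ is the free $S$-act on $X$. For an $S$-act $G$ and a relation $T\subseteq F_X\times F_X$, $T'_G=\{\mu:F_X\to G \text{ homomorphism}: T\subseteq\ker\mu\}$ and $T''_G=\bigcap_{\mu\in T'_G}\ker\mu$ (empty intersection $=F_X\times F_X$). $S$-acts $G_1,G_2$ are geometrically equivalent iff $T''_{G_1}=T''_{G_2}$ for all nonempty finite $X$ and all $T\subseteq F_X\times F_X$. *)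

From mathcomp Require Import all_boot.
Set Implicit Arguments.
Unset Strict Implicit.
Unset Printing Implicit Defensive.

Record SGroup := {
  gcar :> Type;
  gmul : gcar -> gcar -> gcar;
  gone : gcar;
  ginv : gcar -> gcar;
  gmulA : forall x y z, gmul x (gmul y z) = gmul (gmul x y) z;
  gmul1l : forall x, gmul gone x = x;
  gmul1r : forall x, gmul x gone = x;
  gmulVl : forall x, gmul (ginv x) x = gone;
  gmulVr : forall x, gmul x (ginv x) = gone
}.

(* Left S-acts (carrier + action satisfying 1a = a, (st)a = s(ta)).
   Nonemptiness is imposed separately where needed. *)
Record Act (S : SGroup) := {
  acar :> Type;
  act : gcar S -> acar -> acar;
  act1 : forall a, act (gone S) a = a;
  actA : forall s t a, act (gmul s t) a = act s (act t a)
}.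

Section Acts.
Variable S : SGroup.

Definition is_hom (A B : Act S) (f : A -> B) : Prop :=
  forall (s : S) (a : A), f (act s a) = act s (f a).

(* A has no zero subact: no one-element subact {a}, i.e. no a with s a = a for all s. *)
Definition no_zero_subact (A : Act S) : Prop :=
  ~ exists a : A, forall s : S, act s a = a.

Definition coprod_fun (A B : Act S) (s : S) (x : A + B) : A + B :=
  match x with inl a => inl (act s a) | inr b => inr (act s b) end.

Lemma coprod_act1 (A B : Act S) x : @coprod_fun A B (gone S) x = x.
Proof. by case: x => [a|b] /=; rewrite act1. Qed.

Lemma coprod_actA (A B : Act S) s t x :
  @coprod_fun A B (gmul s t) x = @coprod_fun A B s (@coprod_fun A B t x).
Proof. by case: x => [a|b] /=; rewrite actA. Qed.

Definition coprod (A B : Act S) : Act S :=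
  {| acar := (A + B)%type; act := @coprod_fun A B;
     act1 := @coprod_act1 A B; actA := @coprod_actA A B |}.

(* A^{( * )I} = coproduct of I copies of A, carrier I x A *)
Definition copow_fun (I : Type) (A : Act S) (s : S) (x : I * A) : I * A :=
  (x.1, act s x.2).

Lemma copow_act1 (I : Type) (A : Act S) x : @copow_fun I A (gone S) x = x.
Proof. by case: x => i a; rewrite /copow_fun /= act1. Qed.

Lemma copow_actA (I : Type) (A : Act S) s t x :
  @copow_fun I A (gmul s t) x = @copow_fun I A s (@copow_fun I A t x).
Proof. by case: x => i a; rewrite /copow_fun /= actA. Qed.

Definition copow (I : Type) (A : Act S) : Act S :=
  {| acar := (I * A)%type; act := @copow_fun I A;
     act1 := @copow_act1 I A; actA := @copow_actA I A |}.

Definition zero_act : Act S :=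
  {| acar := unit; act := fun _ x => x;
     act1 := fun _ => erefl; actA := fun _ _ _ => erefl |}.

(* free S-act F_X = coprod_{x in X} S_x, carrier X x S, s (x,t) = (x, s t) *)
Definition free_fun (X : Type) (s : S) (p : X * S) : X * S :=
  (p.1, gmul s p.2).

Lemma free_act1 (X : Type) p : @free_fun X (gone S) p = p.
Proof. by case: p => x t; rewrite /free_fun /= gmul1l. Qed.

Lemma free_actA (X : Type) s t p :
  @free_fun X (gmul s t) p = @free_fun X s (@free_fun X t p).
Proof. by case: p => x u; rewrite /free_fun /= gmulA. Qed.

Definition free_act (X : Type) : Act S :=
  {| acar := (X * S)%type; act := @free_fun X;
     act1 := @free_act1 X; actA := @free_actA X |}.

(* T''_G : the intersection of ker mu over homomorphisms mu : F_X -> G with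
   T contained in ker mu (empty intersection = F_X x F_X). *)
Definition closure_G (G : Act S) (X : Type)
    (T : free_act X -> free_act X -> Prop) : free_act X -> free_act X -> Prop :=
  fun p q => forall mu : free_act X -> G, is_hom mu ->
    (forall u v, T u v -> mu u = mu v) -> mu p = mu q.

Definition geom_equiv (G1 G2 : Act S) : Prop :=
  forall (X : finType), 0 < #|X| ->
  forall (T : free_act X -> free_act X -> Prop) (p q : free_act X),
    closure_G G1 T p q <-> closure_G G2 T p q.

End Acts.

From mathcomp Require Import all_boot.
From Stdlib Require Import ClassicalEpsilon.

(* T''_G only depends on which acts are separated by homomorphisms into G: if
   the homomorphisms G -> H separate the points of G, then T''_H is contained
   in T''_G.  Both acts of the theorem have the shape B + A^(I) + Z, resp.
   B + A + Z, with Z containing an S-fixed point z0.  The second embeds into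
   the first as the copy i0 of A, and the first is separated by the maps into
   the second that keep one copy of A and collapse all the others onto z0. *)

Section Separation.
Variable S : SGroup.

Definition separated_by (G H : Act S) : Prop :=
  forall u v : G, (forall f : G -> H, is_hom f -> f u = f v) -> u = v.

Lemma is_hom_comp (G H K : Act S) (f : G -> H) (g : H -> K) :
  is_hom f -> is_hom g -> is_hom (g \o f).
Proof. by move=> hf hg s a /=; rewrite hf hg. Qed.

Lemma separated_by_inj (G H : Act S) (f : G -> H) :
  is_hom f -> injective f -> separated_by G H.
Proof. by move=> hf injf u v sep; exact/injf/sep. Qed.

Lemma closure_G_separated (G H : Act S) (X : Type) T (p q : free_act S X) :
  separated_by G H -> closure_G H T p q -> closure_G G T p q.
Proof.
move=> sepGH clH mu hmu hT; apply: sepGH => f hf.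
by apply: (clH (f \o mu)); [exact: is_hom_comp | move=> u v /hT /= ->].
Qed.

Lemma geom_equiv_separated (G H : Act S) :
  separated_by G H -> separated_by H G -> geom_equiv G H.
Proof. by move=> sepGH sepHG X _ T p q; split; apply: closure_G_separated. Qed.

End Separation.

Section CopowerWithFixedPoint.
Variables (S : SGroup) (A B Z : Act S) (I : Type) (i0 : I) (z0 : Z).
Hypothesis z0_fixed : forall s : S, act s z0 = z0.

Local Notation G_copow := (coprod (coprod B (copow I A)) Z).
Local Notation G_single := (coprod (coprod B A) Z).

Definition copy_embed (x : G_single) : G_copow :=
  match x with
  | inl (inl b) => inl (inl b)
  | inl (inr a) => inl (inr (i0, a))
  | inr z => inr z
  end.

Lemma copy_embed_hom : is_hom copy_embed.
Proof. by move=> s [[b|a]|z]. Qed.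

Lemma copy_embed_inj : injective copy_embed.
Proof. by case=> [[b|a]|z] [[b'|a']|z'] //= [] ->. Qed.

Definition collapse_but (i : I) (x : G_copow) : G_single :=
  match x with
  | inl (inl b) => inl (inl b)
  | inl (inr (j, a)) =>
      if excluded_middle_informative (j = i) then inl (inr a) else inr z0
  | inr z => inr z
  end.

Lemma collapse_but_hom i : is_hom (collapse_but i).
Proof.
move=> s [[b|[j a]]|z] //=.
by case: excluded_middle_informative => //= _; rewrite z0_fixed.
Qed.

Lemma collapse_but_self i a : collapse_but i (inl (inr (i, a))) = inl (inr a).
Proof. by rewrite /=; case: excluded_middle_informative. Qed.

Lemma collapse_but_separates (u v : G_copow) :
  (forall i, collapse_but i u = collapse_but i v) -> u = v.
Proof.
case: u => [[b|[j a]]|z] eq_uv.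
- move: (eq_uv i0); case: v {eq_uv} => [[b'|[j' a']]|z'] //=.
  + by case=> ->.
  + by case: excluded_middle_informative.
- move: (eq_uv j); rewrite collapse_but_self.
  case: v {eq_uv} => [[b'|[j' a']]|z'] //=.
  by case: excluded_middle_informative => //= -> [] ->.
- move: (eq_uv i0); case: v eq_uv => [[b'|[j' a']]|z'] //= eq_uv.
  + by move: (eq_uv j') => /=; case: excluded_middle_informative.
  + by case=> ->.
Qed.

Lemma geom_equiv_copow_single : geom_equiv G_copow G_single.
Proof.
apply: geom_equiv_separated.
- move=> u v sep; apply: collapse_but_separates => i.
  exact/sep/collapse_but_hom.
- exact: separated_by_inj copy_embed_hom copy_embed_inj.
Qed.

End CopowerWithFixedPoint.

Theorem proposition3p15 (S : SGroup) (A B : Act S) (I : Type) :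
  inhabited A -> inhabited B -> no_zero_subact A -> inhabited I ->
  geom_equiv (coprod (coprod B (copow I A)) (zero_act S))
             (coprod (coprod B A) (zero_act S)) /\
  geom_equiv (coprod (coprod B (copow I A)) (coprod (zero_act S) (zero_act S)))
             (coprod (coprod B A) (coprod (zero_act S) (zero_act S))).
Proof.
move=> _ _ _ [i0]; split.
- exact: (@geom_equiv_copow_single S A B (zero_act S) I i0 tt).
- exact: (@geom_equiv_copow_single S A B (coprod (zero_act S) (zero_act S))
           I i0 (inl tt)).
Qed.
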